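(* Let $1\le p<2$. There is a constant $C>0$ depending only on $p$ such that for all $n$ and all $a=(a_i)_{i=1}^n$, $b=(b_i)_{i=1}^n$ real sequences, writing $ab=(a_1b_1,\dots,a_nb_n)$, $$s_p(ab)\le C\,s_p(a)\big(\|b\|_\infty+v_p(b)\big).$$
   Context: For a finite real sequence $x=(x_1,\dots,x_n)$, $s_p(x)=\big(\sup_{k\le n}\sup_{0=i_0<\dots<i_k=n}\sum_{j=0}^{k-1}\big|\sum_{\ell=i_j+1}^{i_{j+1}}x_\ell\big|^p\big)^{1/p}$ and $v_p(x)=\big(\sup_{k\le n}\sup_{0=i_0<\dots<i_k=n}\sum_{j=0}^{k-1}|x_{i_{j+1}}-x_{i_j+1}|^p\big)^{1/p}$; $\|b\|_\infty=\max_i|b_i|$. *)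

From Stdlib Require Import Reals List Lra.
Import ListNotations.
Open Scope R_scope.

(* Real power |t|^p for t >= 0, with the convention 0^p = 0 (p > 0). *)
Definition rpow (t p : R) : R := if Req_EM_T t 0 then 0 else Rpower t p.

(* A finite real sequence x = (x_1,...,x_n) is a function nat -> R
   together with its length n; only the values x 1, ..., x n matter. *)

Definition blocksum (x : nat -> R) (i j : nat) : R :=
  fold_right Rplus 0 (map x (seq (S i) (j - i))).

Fixpoint sublists (l : list nat) : list (list nat) :=
  match l with
  | [] => [[]]
  | a :: t => let r := sublists t in map (cons a) r ++ r
  end.

(* All partitions 0 = i_0 < i_1 < ... < i_k = n (k >= 1), given as the
   lists [i_0; ...; i_k].  For n = 0 there is none. *)
Definition partitions (n : nat) : list (list nat) :=
  match n with
  | O => []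
  | _ => map (fun l => 0%nat :: l ++ [n]) (sublists (seq 1 (n - 1)))
  end.

Fixpoint pairsum (f : nat -> nat -> R) (l : list nat) : R :=
  match l with
  | a :: ((b :: _) as t) => f a b + pairsum f t
  | _ => 0
  end.

(* maximum of a finite list of reals (0 for the empty list; all the values
   considered below are nonnegative) *)
Definition maxlist (l : list R) : R := fold_right Rmax 0 l.

Definition sp_pow (p : R) (n : nat) (x : nat -> R) : R :=
  maxlist (map (pairsum (fun i j => rpow (Rabs (blocksum x i j)) p))
               (partitions n)).

Definition s_p (p : R) (n : nat) (x : nat -> R) : R := rpow (sp_pow p n x) (/ p).

Definition vp_pow (p : R) (n : nat) (x : nat -> R) : R :=
  maxlist (map (pairsum (fun i j => rpow (Rabs (x j - x (S i))) p))
               (partitions n)).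

Definition v_p (p : R) (n : nat) (x : nat -> R) : R := rpow (vp_pow p n x) (/ p).

Definition supnorm (n : nat) (b : nat -> R) : R :=
  maxlist (map (fun i => Rabs (b i)) (seq 1 n)).

From Stdlib Require Import Reals Lra Lia List.
Import ListNotations.
Open Scope R_scope.

(* On a block (u, v] compare sum_{u<l<=v} a_l b_l, the Riemann-Stieltjes sum
   sum (A(x, y) b_y) over the finest chain u < u+1 < ... < v (A(x, y) being the
   block sum of a), with the one-term sum A(u, v) b_v. Deleting an interior point t
   between neighbours x < t < y changes the sum by A(x, t) (b_t - b_y). When the
   chain has K+1 interior points, the p-th powers |A(x, t)|^p sum to at most the
   p-variation X of the partial sums of a on the block, and the |b_y - b_t|^p to at
   most 2 v_p(b)^p, so some point costs at most (2 X v_p(b)^p)^(1/p) (K+1)^(-2/p).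
   Since 2/p > 1 these costs are summable (Love-Young), giving
   |sum a_l b_l| <= |A(u, v)| ||b||_oo + 2/(2-p) (2 X v_p(b)^p)^(1/p).
   Raise to the p-th power and sum over the blocks of a partition: the block
   p-variations X are superadditive, so their sum is at most s_p(a)^p. *)

Lemma rpow_Rpower t p : 0 < t -> rpow t p = Rpower t p.
Proof. intros Ht; unfold rpow; destruct (Req_EM_T t 0); [lra | reflexivity]. Qed.

Lemma rpow_0_l p : rpow 0 p = 0.
Proof. unfold rpow; destruct (Req_EM_T 0 0); [reflexivity | lra]. Qed.

Lemma rpow_nonneg t p : 0 <= rpow t p.
Proof.
  unfold rpow; destruct (Req_EM_T t 0); [lra |].
  left; apply exp_pos.
Qed.

Lemma rpow_le_compat t u p : 0 < p -> 0 <= t <= u -> rpow t p <= rpow u p.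
Proof.
  intros Hp Htu; destruct (Req_dec t 0) as [-> | Ht].
  - rewrite rpow_0_l; apply rpow_nonneg.
  - rewrite !rpow_Rpower by lra; apply Rle_Rpower_l; lra.
Qed.

Lemma rpow_le_reg t u p : 0 < p -> 0 <= t -> 0 <= u -> rpow t p <= rpow u p -> t <= u.
Proof.
  intros Hp Ht Hu Hle; destruct (Rle_lt_dec t u) as [| Hut]; [assumption |].
  enough (rpow u p < rpow t p) by lra.
  rewrite (rpow_Rpower t) by lra.
  destruct (Req_dec u 0) as [-> | Hu0].
  - rewrite rpow_0_l; apply exp_pos.
  - rewrite rpow_Rpower by lra; apply Rlt_Rpower_l; lra.
Qed.

Lemma rpow_mult_distr x y p :
  0 <= x -> 0 <= y -> rpow (x * y) p = rpow x p * rpow y p.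
Proof.
  intros Hx Hy.
  destruct (Req_dec x 0) as [-> | Hx0]; [rewrite Rmult_0_l, !rpow_0_l; ring |].
  destruct (Req_dec y 0) as [-> | Hy0]; [rewrite Rmult_0_r, !rpow_0_l; ring |].
  rewrite !rpow_Rpower by nra; symmetry; apply Rpower_mult_distr; lra.
Qed.

Lemma rpow_rpow x p q : 0 <= x -> rpow (rpow x p) q = rpow x (p * q).
Proof.
  intros Hx; destruct (Req_dec x 0) as [-> | Hx0]; [rewrite !rpow_0_l; reflexivity |].
  rewrite (rpow_Rpower x p), !rpow_Rpower by (try apply exp_pos; lra).
  apply Rpower_mult.
Qed.

Lemma rpow_1_r x : 0 <= x -> rpow x 1 = x.
Proof.
  intros Hx; destruct (Req_dec x 0) as [-> | Hx0]; [apply rpow_0_l |].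
  rewrite rpow_Rpower by lra; apply Rpower_1; lra.
Qed.

Lemma rpow_rpow_inv x p : 0 < p -> 0 <= x -> rpow (rpow x p) (/ p) = x.
Proof.
  intros Hp Hx; rewrite rpow_rpow, Rinv_r by lra; apply rpow_1_r; assumption.
Qed.

Lemma rpow_inv_rpow x p : 0 < p -> 0 <= x -> rpow (rpow x (/ p)) p = x.
Proof.
  intros Hp Hx; rewrite rpow_rpow, Rinv_l by lra; apply rpow_1_r; assumption.
Qed.

Lemma rpow_ge_base u p : 1 <= p -> 1 <= u -> u <= rpow u p.
Proof.
  intros Hp Hu; rewrite rpow_Rpower by lra.
  rewrite <- (Rpower_1 u) at 1 by lra; apply Rle_Rpower; lra.
Qed.

Lemma rpow_plus_le x y p : 0 < p -> 0 <= x -> 0 <= y ->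
  rpow (x + y) p <= rpow 2 p * (rpow x p + rpow y p).
Proof.
  intros Hp Hx Hy.
  assert (Hmax : rpow (Rmax x y) p <= rpow x p + rpow y p).
  { pose proof (rpow_nonneg x p); pose proof (rpow_nonneg y p).
    unfold Rmax; destruct (Rle_dec x y); lra. }
  assert (Hle : rpow (x + y) p <= rpow (2 * Rmax x y) p).
  { apply rpow_le_compat; [lra |].
    split; [lra |]; unfold Rmax; destruct (Rle_dec x y); lra. }
  rewrite rpow_mult_distr in Hle by (unfold Rmax; destruct (Rle_dec x y); lra).
  pose proof (rpow_nonneg 2 p); nra.
Qed.

Inductive chain : nat -> list nat -> nat -> Prop :=
| chain_one a : chain a [a] a
| chain_cons a b L c : (a < b)%nat -> chain b L c -> chain a (a :: L) c.

Lemma chain_head a L c : chain a L c -> exists L', L = a :: L'.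
Proof. intros H; inversion H; eauto. Qed.

Lemma chain_le a L c : chain a L c -> (a <= c)%nat.
Proof. induction 1; lia. Qed.

Lemma chain_inv c x M d : chain c (x :: M) d ->
  x = c /\ ((M = [] /\ c = d) \/ exists b, (c < b)%nat /\ chain b M d).
Proof. intros H; inversion H; subst; eauto. Qed.

Lemma chain_self c L : chain c L c -> L = [c].
Proof.
  intros H; inversion H as [| ? b L' ? Hb HL]; [reflexivity |].
  apply chain_le in HL; lia.
Qed.

Lemma chain_seq i k : chain i (seq i (S k)) (i + k).
Proof.
  revert i; induction k as [| k IH]; intros i.
  - rewrite Nat.add_0_r; constructor.
  - apply chain_cons with (S i); [lia |].
    replace (i + S k)%nat with (S i + k)%nat by lia; apply IH.
Qed.

Lemma chain_exists i n : (i <= n)%nat -> exists R, chain i R n.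
Proof.
  intros Hin; exists (seq i (S (n - i))).
  replace n with (i + (n - i))%nat at 2 by lia; apply chain_seq.
Qed.

Lemma pairsum_cons f a x L : pairsum f (a :: x :: L) = f a x + pairsum f (x :: L).
Proof. reflexivity. Qed.

Lemma pairsum_nonneg f L : (forall u v, 0 <= f u v) -> 0 <= pairsum f L.
Proof.
  intros Hf; induction L as [| a [| b L] IH]; simpl; try lra.
  simpl in IH; specialize (Hf a b); lra.
Qed.

Lemma pairsum_lin c d f g L :
  pairsum (fun u v => c * f u v + d * g u v) L = c * pairsum f L + d * pairsum g L.
Proof.
  induction L as [| a [| b L] IH]; simpl; try ring.
  simpl in IH; rewrite IH; ring.
Qed.

Lemma pairsum_app_cons f L1 u R :
  pairsum f (L1 ++ u :: R) = pairsum f (L1 ++ [u]) + pairsum f (u :: R).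
Proof.
  induction L1 as [| x [| y L1] IH]; simpl; try ring.
  simpl in IH; rewrite IH; ring.
Qed.

Lemma pairsum_le_compat_chain f g lo P hi : chain lo P hi ->
  (forall u v, (lo <= u)%nat -> (u < v)%nat -> (v <= hi)%nat -> f u v <= g u v) ->
  pairsum f P <= pairsum g P.
Proof.
  induction 1 as [| a b L c Hab HL IH]; intros Hfg; simpl; [lra |].
  destruct (chain_head _ _ _ HL) as [L' ->].
  pose proof (chain_le _ _ _ HL).
  assert (f a b <= g a b) by (apply Hfg; lia).
  assert (pairsum f (b :: L') <= pairsum g (b :: L')) by (apply IH; intros; apply Hfg; lia).
  lra.
Qed.

Lemma chain_app a L b M c : chain a L b -> chain b M c ->
  chain a (L ++ tl M) c /\ forall f, pairsum f (L ++ tl M) = pairsum f L + pairsum f M.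
Proof.
  intros HL HM; induction HL as [a | a b' L c' Hab HL IH].
  - destruct (chain_head _ _ _ HM) as [M' ->]; split; [assumption | intros; simpl; ring].
  - destruct (IH HM) as [Happ Hsum]; split; [econstructor; eauto |].
    intros f; destruct (chain_head _ _ _ HL) as [L' ->]; simpl app.
    rewrite !pairsum_cons, Rplus_assoc, <- (Hsum f); reflexivity.
Qed.

Lemma chain_extend_left f lo s R hi : (forall u v, 0 <= f u v) ->
  (lo <= s)%nat -> chain s R hi -> exists R', chain lo R' hi /\ pairsum f R <= pairsum f R'.
Proof.
  intros Hf Hls HR; destruct (Nat.eq_dec lo s) as [-> | Hne].
  { exists R; split; [assumption | lra]. }
  destruct (chain_head _ _ _ HR) as [R0 ->].
  exists (lo :: s :: R0); split; [apply chain_cons with s; [lia | assumption] |].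
  rewrite pairsum_cons; specialize (Hf lo s); lra.
Qed.

Fixpoint incr_from (a : nat) (M : list nat) : Prop :=
  match M with [] => True | x :: M' => (a <= x)%nat /\ incr_from (S x) M' end.

Lemma incr_from_weaken a a' M : (a' <= a)%nat -> incr_from a M -> incr_from a' M.
Proof. destruct M; simpl; [tauto |]; intros ? [? ?]; split; [lia | assumption]. Qed.

Lemma nil_in_sublists l : In [] (sublists l).
Proof. induction l; simpl; [tauto |]; apply in_or_app; right; assumption. Qed.

Lemma In_sublists_seq k : forall a M,
  In M (sublists (seq a k)) <-> incr_from a M /\ Forall (fun x => (x < a + k)%nat) M.
Proof.
  induction k as [| k IH]; intros a M; split.
  - simpl; intros [<- | []]; simpl; auto.
  - intros [Hinc HM]; destruct M as [| x M]; [simpl; auto |].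
    destruct Hinc; inversion HM; lia.
  - simpl; intros H; apply in_app_or in H; destruct H as [H | H].
    + apply in_map_iff in H; destruct H as [M' [<- HM']].
      apply IH in HM'; destruct HM' as [H1 H2]; simpl; split; [split; [lia | assumption] |].
      constructor; [lia |]; revert H2; apply Forall_impl; intros; lia.
    + apply IH in H; destruct H as [H1 H2].
      split; [apply incr_from_weaken with (S a); [lia | assumption] |].
      revert H2; apply Forall_impl; intros; lia.
  - intros [H1 H2]; destruct M as [| x M]; [apply nil_in_sublists |].
    simpl; apply in_or_app; destruct H1 as [Hax H1]; inversion H2 as [| ? ? Hx HM]; subst.
    destruct (Nat.eq_dec x a) as [-> | Hne].
    + left; apply in_map, IH; split; [assumption |].
      revert HM; apply Forall_impl; intros; lia.
    + right; apply IH; split; [simpl; split; [lia | assumption] |].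
      constructor; [lia |]; revert HM; apply Forall_impl; intros; lia.
Qed.

Lemma chain_cons_snoc_iff lo M hi : (lo < hi)%nat ->
  chain lo (lo :: M ++ [hi]) hi <-> incr_from (S lo) M /\ Forall (fun x => (x < hi)%nat) M.
Proof.
  revert lo; induction M as [| x M IH]; intros lo Hlt; split.
  - simpl; auto.
  - intros _; apply chain_cons with hi; [assumption | constructor].
  - intros H; apply chain_inv in H as [_ [[Habs _] | [b [Hb H]]]]; [discriminate |].
    apply chain_inv in H as Hx; destruct Hx as [-> _].
    destruct (Nat.eq_dec b hi) as [-> | Hne].
    + apply chain_self in H; destruct M; discriminate.
    + pose proof (chain_le _ _ _ H); apply IH in H as [Hinc HF]; [| lia].
      repeat split; [lia | assumption |]; constructor; [lia | assumption].
  - intros [[Hx HM] HF]; inversion HF; subst.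
    apply chain_cons with x; [lia |]; apply IH; auto.
Qed.

Lemma chain_snoc_form lo L hi : chain lo L hi -> (lo < hi)%nat ->
  exists M, L = lo :: M ++ [hi].
Proof.
  induction 1 as [| a b L c Hab HL IH]; intros Hlt; [lia |].
  destruct (Nat.eq_dec b c) as [-> | Hne].
  - apply chain_self in HL; subst; exists []; reflexivity.
  - pose proof (chain_le _ _ _ HL).
    destruct IH as [M ->]; [lia |]; exists (b :: M); reflexivity.
Qed.

Definition chains (i j : nat) : list (list nat) :=
  map (fun M => i :: M ++ [j]) (sublists (seq (S i) (j - i - 1))).

Lemma In_chains_iff i Q j : (i < j)%nat -> In Q (chains i j) <-> chain i Q j.
Proof.
  intros Hij; unfold chains; rewrite in_map_iff; split.
  - intros [M [<- HM]]; apply chain_cons_snoc_iff; [assumption |].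
    apply In_sublists_seq in HM as [Hinc HF]; split; [assumption |].
    revert HF; apply Forall_impl; intros; lia.
  - intros HQ; destruct (chain_snoc_form _ _ _ HQ Hij) as [M ->].
    apply chain_cons_snoc_iff in HQ as [Hinc HF]; [| assumption].
    exists M; split; [reflexivity |]; apply In_sublists_seq; split; [assumption |].
    revert HF; apply Forall_impl; intros; lia.
Qed.

Lemma partitions_chains n : (1 <= n)%nat -> partitions n = chains 0 n.
Proof.
  intros Hn; destruct n as [| n]; [lia |]; unfold partitions, chains.
  rewrite Nat.sub_0_r; reflexivity.
Qed.

Lemma maxlist_nonneg l : 0 <= maxlist l.
Proof. induction l; simpl; [lra |]; eapply Rle_trans; [eassumption | apply Rmax_r]. Qed.

Lemma le_maxlist {A} (F : A -> R) L x : In x L -> F x <= maxlist (map F L).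
Proof.
  induction L as [| y L IH]; simpl; [tauto |]; intros [-> | Hx]; [apply Rmax_l |].
  eapply Rle_trans; [apply IH, Hx | apply Rmax_r].
Qed.

Lemma maxlist_lub {A} (F : A -> R) L B : 0 <= B -> (forall x, In x L -> F x <= B) ->
  maxlist (map F L) <= B.
Proof.
  intros HB H; induction L as [| y L IH]; simpl; [assumption |].
  apply Rmax_lub; [apply H; left; reflexivity | apply IH; intros; apply H; right; assumption].
Qed.

Lemma maxlist_attained {A} (F : A -> R) L : L <> [] -> (forall x, 0 <= F x) ->
  exists x, In x L /\ maxlist (map F L) = F x.
Proof.
  intros HL HF; induction L as [| y [| z L] IH]; [congruence | |].
  - exists y; split; [left; reflexivity |]; simpl; apply Rmax_left; apply HF.
  - destruct IH as [x [Hx Hm]]; [discriminate |].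
    change (maxlist (map F (y :: z :: L))) with (Rmax (F y) (maxlist (map F (z :: L)))).
    rewrite Hm; unfold Rmax; destruct (Rle_dec (F y) (F x)).
    + exists x; split; [right; assumption | reflexivity].
    + exists y; split; [left |]; reflexivity.
Qed.

Definition chain_max (f : nat -> nat -> R) (i j : nat) : R :=
  maxlist (map (pairsum f) (chains i j)).

Lemma pairsum_le_chain_max f i Q j : (i < j)%nat -> chain i Q j ->
  pairsum f Q <= chain_max f i j.
Proof. intros Hij HQ; apply le_maxlist, In_chains_iff; assumption. Qed.

Lemma pairsum_le_partition_max f Q n : (1 <= n)%nat -> chain 0 Q n ->
  pairsum f Q <= maxlist (map (pairsum f) (partitions n)).
Proof.
  intros Hn HQ; rewrite partitions_chains by assumption.
  apply pairsum_le_chain_max; [lia | assumption].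
Qed.

Lemma chain_max_attained f i j : (i < j)%nat -> (forall u v, 0 <= f u v) ->
  exists Q, chain i Q j /\ chain_max f i j = pairsum f Q.
Proof.
  intros Hij Hf.
  assert (Hne : chains i j <> []).
  { intros Hnil; pose proof (nil_in_sublists (seq (S i) (j - i - 1))) as Hin.
    unfold chains in Hnil; apply map_eq_nil in Hnil; rewrite Hnil in Hin; contradiction. }
  destruct (maxlist_attained (pairsum f) _ Hne (fun Q => pairsum_nonneg f Q Hf)) as [Q [HQ Hm]].
  exists Q; split; [apply In_chains_iff | ]; assumption.
Qed.

Lemma pairsum_chain_max_le f lo P hi : (forall u v, 0 <= f u v) -> chain lo P hi ->
  exists R, chain lo R hi /\ pairsum (chain_max f) P <= pairsum f R.
Proof.
  intros Hf; induction 1 as [a | a b L c Hab HL IH].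
  - exists [a]; split; [constructor | simpl; lra].
  - destruct IH as [R' [HR' Hle]]; destruct (chain_head _ _ _ HL) as [L' ->].
    destruct (chain_max_attained f a b Hab Hf) as [R0 [HR0 Hm]].
    destruct (chain_app _ _ _ _ _ HR0 HR') as [Happ Hsum].
    exists (R0 ++ tl R'); split; [assumption |].
    rewrite Hsum, pairsum_cons, Hm; lra.
Qed.

Definition block_pow (p : R) (x : nat -> R) (i j : nat) : R := rpow (Rabs (blocksum x i j)) p.

Definition incr_pow (p : R) (b : nat -> R) (t v : nat) : R := rpow (Rabs (b v - b t)) p.

(* [vp_pow] charges the block (u, v] with [incr_pow p b (S u) v]. Consecutive
   increments of a chain share an endpoint, so they are not blocks of a single
   partition; the odd-numbered ones and the even-numbered ones are, whence R1, R2. *)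
Lemma chain_increments_split p b n c L j : (1 <= c)%nat -> (j <= n)%nat -> chain c L j ->
  exists R1 R2, chain (pred c) R1 n /\ chain c R2 n /\
    pairsum (incr_pow p b) L <=
      pairsum (fun u v => incr_pow p b (S u) v) R1 + pairsum (fun u v => incr_pow p b (S u) v) R2.
Proof.
  set (F := fun u v => incr_pow p b (S u) v).
  assert (HF : forall u v, 0 <= F u v) by (intros; apply rpow_nonneg).
  intros Hc Hjn HL; revert Hc; induction HL as [a | a a' L c Haa' HL IH]; intros Ha.
  - destruct (chain_exists (pred a) n) as [R1 HR1]; [lia |].
    destruct (chain_exists a n) as [R2 HR2]; [lia |].
    exists R1, R2; repeat split; [assumption | assumption |]; simpl.
    pose proof (pairsum_nonneg F R1 HF); pose proof (pairsum_nonneg F R2 HF); lra.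
  - destruct IH as [R1 [R2 [HR1 [HR2 Hle]]]]; [assumption | lia |].
    destruct (chain_extend_left F a (pred a') R1 n HF) as [R2' [HR2' Hle2]]; [lia | assumption |].
    destruct (chain_head _ _ _ HR2) as [R0 ->]; destruct (chain_head _ _ _ HL) as [L' ->].
    exists (pred a :: a' :: R0), R2'.
    repeat split; [apply chain_cons with a'; [lia | assumption] | assumption |].
    rewrite !pairsum_cons.
    replace (F (pred a) a') with (incr_pow p b a a') by (unfold F; f_equal; lia).
    lra.
Qed.

Lemma pairsum_incr_le_vp p b n c L j : (1 <= c)%nat -> (j <= n)%nat -> chain c L j ->
  pairsum (incr_pow p b) L <= 2 * vp_pow p n b.
Proof.
  intros Hc Hjn HL; pose proof (chain_le _ _ _ HL).
  set (F := fun u v => incr_pow p b (S u) v).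
  assert (HF : forall u v, 0 <= F u v) by (intros; apply rpow_nonneg).
  assert (Hvp : forall s R, chain s R n -> pairsum F R <= vp_pow p n b).
  { intros s R HR.
    destruct (chain_extend_left F 0 s R n HF) as [R' [HR' Hle]]; [lia | assumption |].
    eapply Rle_trans; [exact Hle | apply pairsum_le_partition_max; [lia | assumption]]. }
  destruct (chain_increments_split p b n c L j Hc Hjn HL) as [R1 [R2 [HR1 [HR2 Hle]]]].
  pose proof (Hvp _ _ HR1); pose proof (Hvp _ _ HR2); fold F in Hle; lra.
Qed.

Lemma fold_right_Rplus_acc l acc : fold_right Rplus acc l = fold_right Rplus 0 l + acc.
Proof. induction l as [| x l IH]; simpl; [ring | rewrite IH; ring]. Qed.

Lemma blocksum_seq x i k : blocksum x i (i + k) = fold_right Rplus 0 (map x (seq (S i) k)).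
Proof. unfold blocksum; do 3 f_equal; lia. Qed.

Lemma blocksum_split x u t v : (u <= t)%nat -> (t <= v)%nat ->
  blocksum x u v = blocksum x u t + blocksum x t v.
Proof.
  intros Hut Htv.
  pose proof (blocksum_seq x u (t - u)) as Hut'.
  pose proof (blocksum_seq x t (v - t)) as Htv'.
  pose proof (blocksum_seq x u (t - u + (v - t))) as Huv.
  rewrite seq_app, map_app, fold_right_app, fold_right_Rplus_acc in Huv.
  replace (u + (t - u))%nat with t in Hut' by lia.
  replace (t + (v - t))%nat with v in Htv' by lia.
  replace (u + (t - u + (v - t)))%nat with v in Huv by lia.
  replace (S u + (t - u))%nat with (S t) in Huv by lia.
  lra.
Qed.

Definition stieltjes_sum (a b : nat -> R) (Q : list nat) : R :=
  pairsum (fun u v => blocksum a u v * b v) Q.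

Lemma stieltjes_sum_seq a b i k :
  stieltjes_sum a b (seq i (S k)) = blocksum (fun l => a l * b l) i (i + k).
Proof.
  unfold stieltjes_sum; revert i; induction k as [| k IH]; intros i.
  - rewrite Nat.add_0_r; unfold blocksum; rewrite Nat.sub_diag; reflexivity.
  - change (seq i (S (S k))) with (i :: S i :: seq (S (S i)) k).
    rewrite pairsum_cons; change (S i :: seq (S (S i)) k) with (seq (S i) (S k)).
    assert (Hone : forall x, blocksum x i (S i) = x (S i)).
    { intros x; unfold blocksum; rewrite Nat.sub_succ_l, Nat.sub_diag by lia; simpl; ring. }
    rewrite IH, (blocksum_split _ i (S i) (i + S k)) by lia; rewrite !Hone.
    replace (i + S k)%nat with (S i + k)%nat by lia; reflexivity.
Qed.

Lemma stieltjes_sum_remove_point a b L1 u t v L2 : (u <= t)%nat -> (t <= v)%nat ->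
  stieltjes_sum a b (L1 ++ u :: t :: v :: L2) - stieltjes_sum a b (L1 ++ u :: v :: L2)
    = blocksum a u t * (b t - b v).
Proof.
  intros Hut Htv; unfold stieltjes_sum.
  rewrite (pairsum_app_cons _ L1 u (t :: v :: L2)), (pairsum_app_cons _ L1 u (v :: L2)).
  rewrite !pairsum_cons.
  rewrite (blocksum_split a u t v) by assumption; ring.
Qed.

Definition sumR (l : list R) : R := fold_right Rplus 0 l.

Lemma sumR_nonneg {A} (F : A -> R) l : (forall x, 0 <= F x) -> 0 <= sumR (map F l).
Proof. intros HF; induction l as [| x l IH]; simpl; [lra |]; specialize (HF x); lra. Qed.

Lemma le_sumR {A} (F : A -> R) l x : (forall x, 0 <= F x) -> In x l -> F x <= sumR (map F l).
Proof.
  intros HF Hx; induction l as [| y l IH]; simpl in *; [tauto |].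
  pose proof (sumR_nonneg F l HF); pose proof (HF y).
  destruct Hx as [-> | Hx]; [lra |]; specialize (IH Hx); lra.
Qed.

Lemma exists_le_average {A} (F : A -> R) l : l <> [] ->
  exists e, In e l /\ INR (length l) * F e <= sumR (map F l).
Proof.
  induction l as [| e [| e' l] IH]; intros Hl; [congruence | |].
  - exists e; split; [left; reflexivity | simpl; lra].
  - destruct IH as [x [Hx Hs]]; [discriminate |].
    set (l' := e' :: l) in *; pose proof (pos_INR (length l')).
    change (length (e :: l')) with (S (length l')); rewrite S_INR.
    change (sumR (map F (e :: l'))) with (F e + sumR (map F l')).
    destruct (Rle_dec (F e) (F x)).
    + exists e; split; [left; reflexivity | nra].
    + exists x; split; [right; assumption | nra].
Qed.

(* Minimising [x e * Y + y e * X] and applying AM-GM to its two terms. *)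
Lemma exists_small_product {A} (x y : A -> R) l X Y : l <> [] ->
  (forall e, 0 <= x e) -> (forall e, 0 <= y e) ->
  sumR (map x l) <= X -> sumR (map y l) <= Y ->
  exists e, In e l /\ INR (length l) ^ 2 * (x e * y e) <= X * Y.
Proof.
  intros Hl Hx Hy HX HY.
  pose proof (sumR_nonneg x l Hx); pose proof (sumR_nonneg y l Hy).
  destruct (exists_le_average (fun e => x e * Y + y e * X) l Hl) as [e [He Havg]].
  exists e; split; [assumption |].
  assert (Hsum : sumR (map (fun e => x e * Y + y e * X) l)
                = sumR (map x l) * Y + sumR (map y l) * X).
  { clear; unfold sumR; induction l as [| e l IH]; simpl; [ring | rewrite IH; ring]. }
  pose proof (le_sumR x l e Hx He); pose proof (le_sumR y l e Hy He).
  pose proof (Hx e); pose proof (Hy e); pose proof (pos_INR (length l)).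
  set (K := INR (length l)) in *; set (s := x e * Y + y e * X) in *.
  assert (Hs : 0 <= s) by (unfold s; nra).
  assert (HKs : K * s <= 2 * X * Y) by nra.
  destruct (Req_dec X 0) as [HX0 | HX0]; [replace (x e) with 0 by lra; nra |].
  destruct (Req_dec Y 0) as [HY0 | HY0]; [replace (y e) with 0 by lra; nra |].
  assert (Hamgm : 4 * (x e * Y) * (y e * X) <= s ^ 2)
    by (unfold s; pose proof (pow2_ge_0 (x e * Y - y e * X)); nra).
  assert (Hsq : (K * s) ^ 2 <= (2 * X * Y) ^ 2) by (apply pow_incr; split; nra).
  apply Rmult_le_reg_l with (4 * X * Y); [nra |].
  replace (4 * X * Y * (K ^ 2 * (x e * y e))) with (K ^ 2 * (4 * (x e * Y) * (y e * X))) by ring.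
  apply Rle_trans with ((K * s) ^ 2); [| nra].
  replace ((K * s) ^ 2) with (K ^ 2 * s ^ 2) by ring.
  apply Rmult_le_compat_l; [nra | assumption].
Qed.

(* The integral-test step: (K+1)^(-s) <= int_K^(K+1) x^(-s) dx. *)
Lemma Rpower_diff_ge s K : 1 < s -> 0 < K ->
  (s - 1) * Rpower (K + 1) (- s) <= Rpower K (1 - s) - Rpower (K + 1) (1 - s).
Proof.
  intros Hs HK; set (E := Rpower (K + 1) (- s)).
  assert (HE : 0 < E) by apply exp_pos.
  assert (HK1 : Rpower (K + 1) (1 - s) = E * (K + 1)).
  { unfold E, Rpower; replace ((1 - s) * ln (K + 1)) with (- s * ln (K + 1) + ln (K + 1)) by ring.
    rewrite exp_plus, exp_ln by lra; reflexivity. }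
  set (d := (1 - s) * (ln K - ln (K + 1))).
  assert (HK0 : Rpower K (1 - s) = E * (K + 1) * exp d).
  { rewrite <- HK1; unfold Rpower, d; rewrite <- exp_plus; f_equal; ring. }
  assert (Hln : ln K - ln (K + 1) <= - / (K + 1)).
  { pose proof (exp_ineq1_le (ln K - ln (K + 1))) as H.
    unfold Rminus in H at 2; rewrite exp_plus, exp_Ropp, !exp_ln in H by lra.
    replace (K * / (K + 1)) with (1 - / (K + 1)) in H by (field; lra); lra. }
  assert (Hd : (s - 1) * / (K + 1) <= d) by (unfold d; nra).
  pose proof (exp_ineq1_le d).
  assert (Hmul : E * (K + 1) * ((s - 1) * / (K + 1)) <= E * (K + 1) * (exp d - 1))
    by (apply Rmult_le_compat_l; nra).
  replace (E * (K + 1) * ((s - 1) * / (K + 1))) with ((s - 1) * E) in Hmul by (field; lra).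
  rewrite HK1, HK0; lra.
Qed.

Fixpoint zeta_partial (s : R) (K : nat) : R :=
  match K with O => 0 | S K' => zeta_partial s K' + Rpower (INR K) (- s) end.

Lemma zeta_partial_tail_le s K : 1 < s -> (1 <= K)%nat ->
  zeta_partial s K + Rpower (INR K) (1 - s) / (s - 1) <= s / (s - 1).
Proof.
  intros Hs; induction K as [| [| K] IH]; intros HK; [lia | |].
  - simpl; unfold Rpower; rewrite ln_1, !Rmult_0_r, exp_0; apply Req_le; field; lra.
  - specialize (IH ltac:(lia)).
    change (zeta_partial s (S (S K))) with (zeta_partial s (S K) + Rpower (INR (S (S K))) (- s)).
    rewrite (S_INR (S K)) in *.
    pose proof (Rpower_diff_ge s (INR (S K)) Hs ltac:(apply lt_0_INR; lia)) as Hstep.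
    unfold Rdiv in *; apply Rmult_le_compat_r with (r := / (s - 1)) in Hstep;
      [| apply Rlt_le, Rinv_0_lt_compat; lra].
    replace ((s - 1) * Rpower (INR (S K) + 1) (- s) * / (s - 1))
      with (Rpower (INR (S K) + 1) (- s)) in Hstep by (field; lra).
    lra.
Qed.

Lemma zeta_partial_le s K : 1 < s -> zeta_partial s K <= s / (s - 1).
Proof.
  intros Hs; destruct K as [| K]; [simpl; apply Rlt_le, Rdiv_lt_0_compat; lra |].
  pose proof (zeta_partial_tail_le s (S K) Hs ltac:(lia)).
  assert (0 < Rpower (INR (S K)) (1 - s) / (s - 1))
    by (apply Rdiv_lt_0_compat; [apply exp_pos | lra]).
  lra.
Qed.

Fixpoint triples (l : list nat) : list (nat * nat * nat) :=
  match l with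
  | a :: ((b :: c :: _) as l') => (a, b, c) :: triples l'
  | _ => []
  end.

Lemma triples_length l : length (triples l) = (length l - 2)%nat.
Proof.
  induction l as [| a [| b [| c l]] IH]; simpl; try reflexivity.
  simpl in IH; rewrite IH; lia.
Qed.

Lemma sumR_triples_fst_le f L : (forall u v, 0 <= f u v) ->
  sumR (map (fun tr => f (fst (fst tr)) (snd (fst tr))) (triples L)) <= pairsum f L.
Proof.
  intros Hf; induction L as [| a [| b [| c L]] IH]; simpl; try lra.
  - specialize (Hf a b); lra.
  - simpl in IH; specialize (Hf a b); lra.
Qed.

Lemma sumR_triples_snd g L :
  sumR (map (fun tr => g (snd (fst tr)) (snd tr)) (triples L)) = pairsum g (tl L).
Proof.
  induction L as [| a [| b [| c L]] IH]; simpl; try lra.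
  simpl in IH; rewrite IH; destruct L; simpl; ring.
Qed.

Lemma In_triples L u t v : In (u, t, v) (triples L) ->
  exists L1 L2, L = L1 ++ u :: t :: v :: L2.
Proof.
  induction L as [| a [| b [| c L]] IH]; simpl; try tauto.
  intros [H | H].
  - injection H as <- <- <-; exists [], L; reflexivity.
  - destruct (IH H) as [L1 [L2 HL]]; exists (a :: L1), L2; rewrite HL; reflexivity.
Qed.

Lemma chain_remove c L1 u t v L2 d : chain c (L1 ++ u :: t :: v :: L2) d ->
  (u < t)%nat /\ (t < v)%nat /\ chain c (L1 ++ u :: v :: L2) d.
Proof.
  revert c; induction L1 as [| x L1 IH]; intros c H; simpl in *.
  - apply chain_inv in H as [-> [[Habs _] | [b [Hb H]]]]; [discriminate |].
    apply chain_inv in H as [-> [[Habs _] | [b' [Hb' H]]]]; [discriminate |].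
    destruct (chain_head _ _ _ H) as [L' HL']; injection HL' as <- _.
    repeat split; [lia | lia |]; apply chain_cons with v; [lia | assumption].
  - apply chain_inv in H as [-> [[Habs _] | [b [Hb H]]]]; [destruct L1; discriminate |].
    destruct (IH _ H) as [Hut [Htv H']]; repeat split; [lia | lia |].
    apply chain_cons with b; assumption.
Qed.

Lemma removal_cost_le w W k p : 0 < p -> 0 <= w -> 0 < k ->
  k ^ 2 * rpow w p <= W -> w <= rpow W (/ p) * Rpower k (- (2 / p)).
Proof.
  intros Hp Hw Hk Hle.
  pose proof (rpow_nonneg w p); assert (HW : 0 <= W) by nra.
  assert (Hk2 : 0 < k ^ 2) by (apply pow_lt; assumption).
  assert (Hkp : 0 < Rpower k (- (2 / p))) by apply exp_pos.
  apply rpow_le_reg with p; [assumption | assumption | pose proof (rpow_nonneg W (/ p)); nra |].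
  rewrite rpow_mult_distr, rpow_inv_rpow, (rpow_Rpower (Rpower k _)), Rpower_mult
    by (try apply rpow_nonneg; lra).
  replace (- (2 / p) * p) with (- INR 2) by (simpl; field; lra).
  rewrite Rpower_Ropp, Rpower_pow by assumption.
  apply Rmult_le_reg_l with (k ^ 2); [assumption |].
  replace (k ^ 2 * (W * / k ^ 2)) with W by (field; lra); assumption.
Qed.

Section LoveYoung.

Variables (p : R) (a b : nat -> R) (i j : nat) (X V : R).

Hypothesis p_pos : 0 < p.
Hypothesis block_pow_le : forall Q, chain i Q j -> pairsum (block_pow p a) Q <= X.
Hypothesis incr_pow_le :
  forall c Q, (i < c)%nat -> chain c Q j -> pairsum (incr_pow p b) Q <= V.

Lemma exists_cheap_removal K Q : chain i Q j -> length Q = (K + 3)%nat ->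
  exists Q', chain i Q' j /\ length Q' = (K + 2)%nat /\
    Rabs (stieltjes_sum a b Q - stieltjes_sum a b Q')
      <= rpow (X * V) (/ p) * Rpower (INR (S K)) (- (2 / p)).
Proof.
  intros HQ HL.
  set (x := fun tr : nat * nat * nat => block_pow p a (fst (fst tr)) (snd (fst tr))).
  set (y := fun tr : nat * nat * nat => incr_pow p b (snd (fst tr)) (snd tr)).
  assert (Hx : sumR (map x (triples Q)) <= X).
  { eapply Rle_trans; [apply sumR_triples_fst_le | apply block_pow_le, HQ].
    intros; apply rpow_nonneg. }
  assert (Hy : sumR (map y (triples Q)) <= V).
  { unfold y; rewrite sumR_triples_snd.
    destruct Q as [| q Q1]; [inversion HQ |].
    apply chain_inv in HQ as [Hq [[HQ1 _] | [c [Hc HQ1]]]]; [subst; simpl in HL; lia |].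
    subst q; apply (incr_pow_le c); assumption. }
  assert (Hlen : length (triples Q) = S K) by (rewrite triples_length; lia).
  destruct (exists_small_product x y (triples Q) X V) as [[[u t] v] [Hin Hsmall]];
    try assumption; try (intros; apply rpow_nonneg).
  { intros Hnil; rewrite Hnil in Hlen; discriminate. }
  rewrite Hlen in Hsmall.
  destruct (In_triples _ _ _ _ Hin) as [L1 [L2 ->]].
  destruct (chain_remove _ _ _ _ _ _ _ HQ) as [Hut [Htv HQ']].
  exists (L1 ++ u :: v :: L2); split; [assumption |].
  split; [rewrite length_app in HL |- *; simpl in HL |- *; lia |].
  rewrite stieltjes_sum_remove_point, Rabs_mult by lia.
  apply removal_cost_le; [assumption | apply Rmult_le_pos; apply Rabs_pos | apply lt_0_INR; lia |].
  rewrite rpow_mult_distr by apply Rabs_pos.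
  unfold x, y, block_pow, incr_pow in Hsmall; simpl in Hsmall.
  rewrite Rabs_minus_sym; assumption.
Qed.

Lemma love_young_chain K : forall Q, chain i Q j -> length Q = (K + 2)%nat ->
  Rabs (stieltjes_sum a b Q - blocksum a i j * b j) <= rpow (X * V) (/ p) * zeta_partial (2 / p) K.
Proof.
  induction K as [| K IH]; intros Q HQ HL.
  - destruct Q as [| q [| q' [| q'' Q]]]; try discriminate.
    apply chain_inv in HQ as [-> [[Habs _] | [c [_ HQ]]]]; [discriminate |].
    apply chain_inv in HQ as [-> [[_ ->] | [c' [_ HQ]]]]; [| inversion HQ].
    unfold stieltjes_sum; simpl.
    replace (blocksum a i j * b j + 0 - blocksum a i j * b j) with 0 by ring.
    rewrite Rabs_R0; lra.
  - destruct (exists_cheap_removal K Q HQ ltac:(lia)) as [Q' [HQ' [HL' Hdrop]]].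
    specialize (IH Q' HQ' HL').
    change (zeta_partial (2 / p) (S K))
      with (zeta_partial (2 / p) K + Rpower (INR (S K)) (- (2 / p))).
    replace (stieltjes_sum a b Q - blocksum a i j * b j)
      with ((stieltjes_sum a b Q' - blocksum a i j * b j)
            + (stieltjes_sum a b Q - stieltjes_sum a b Q')) by ring.
    eapply Rle_trans; [apply Rabs_triang | rewrite Rmult_plus_distr_l; lra].
Qed.

End LoveYoung.

Lemma love_young_block p a b i j X V : 0 < p -> p < 2 -> (i < j)%nat ->
  (forall Q, chain i Q j -> pairsum (block_pow p a) Q <= X) ->
  (forall c Q, (i < c)%nat -> chain c Q j -> pairsum (incr_pow p b) Q <= V) ->
  Rabs (blocksum (fun l => a l * b l) i j - blocksum a i j * b j)
    <= 2 / (2 - p) * rpow (X * V) (/ p).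
Proof.
  intros Hp Hp2 Hij HX HV.
  pose proof (chain_seq i (j - i)) as Hseq; replace (i + (j - i))%nat with j in Hseq by lia.
  pose proof (stieltjes_sum_seq a b i (j - i)) as Hsum.
  replace (i + (j - i))%nat with j in Hsum by lia.
  pose proof (love_young_chain p a b i j X V Hp HX HV (j - i - 1) _ Hseq) as Hly.
  rewrite Hsum, length_seq in Hly; specialize (Hly ltac:(lia)).
  assert (Hzeta : zeta_partial (2 / p) (j - i - 1) <= 2 / (2 - p)).
  { replace (2 / (2 - p)) with ((2 / p) / (2 / p - 1)) by (field; lra).
    apply zeta_partial_le; apply Rmult_lt_reg_r with p; [lra |]; field_simplify; lra. }
  pose proof (rpow_nonneg (X * V) (/ p)); nra.
Qed.

Lemma block_pow_mult_le p a b n u v : 0 < p -> p < 2 -> (u < v)%nat -> (v <= n)%nat ->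
  block_pow p (fun l => a l * b l) u v <=
    rpow 2 p * (block_pow p a u v * rpow (supnorm n b) p
      + rpow (2 / (2 - p)) p * (chain_max (block_pow p a) u v * (2 * vp_pow p n b))).
Proof.
  intros Hp Hp2 Huv Hvn.
  set (Xuv := chain_max (block_pow p a) u v); set (Y := vp_pow p n b); set (B := supnorm n b).
  assert (HXuv : 0 <= Xuv) by apply maxlist_nonneg.
  assert (HY : 0 <= Y) by apply maxlist_nonneg.
  assert (Hk : 0 < 2 / (2 - p)) by (apply Rdiv_lt_0_compat; lra).
  set (Z := rpow (Xuv * (2 * Y)) (/ p)).
  assert (HZ : 0 <= Z) by apply rpow_nonneg.
  assert (Hly : Rabs (blocksum (fun l => a l * b l) u v - blocksum a u v * b v) <= 2 / (2 - p) * Z).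
  { apply love_young_block; [assumption | assumption | assumption | |].
    - intros Q HQ; apply pairsum_le_chain_max; assumption.
    - intros c Q Hc HQ; apply (pairsum_incr_le_vp p b n c Q v); [lia | assumption | assumption]. }
  assert (Hbv : Rabs (b v) <= B).
  { apply (le_maxlist (fun i => Rabs (b i))), in_seq; lia. }
  set (A := blocksum a u v) in *.
  assert (Hsum : Rabs (blocksum (fun l => a l * b l) u v) <= Rabs A * B + 2 / (2 - p) * Z).
  { replace (blocksum (fun l => a l * b l) u v)
      with (A * b v + (blocksum (fun l => a l * b l) u v - A * b v)) at 1 by ring.
    eapply Rle_trans; [apply Rabs_triang |]; rewrite Rabs_mult.
    apply Rplus_le_compat; [apply Rmult_le_compat_l; [apply Rabs_pos |] |]; assumption. }
  unfold block_pow at 1.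
  eapply Rle_trans; [apply rpow_le_compat; [assumption | split; [apply Rabs_pos | exact Hsum]] |].
  pose proof (Rabs_pos A); assert (HB : 0 <= B) by apply maxlist_nonneg.
  eapply Rle_trans; [apply rpow_plus_le; [assumption | nra | nra] |].
  rewrite !rpow_mult_distr by (try apply Rabs_pos; lra).
  unfold Z; rewrite rpow_inv_rpow by nra; right; reflexivity.
Qed.

Lemma sp_pow_mult_le p n a b : 0 < p -> p < 2 ->
  sp_pow p n (fun l => a l * b l) <=
    rpow 2 p * (rpow (supnorm n b) p + rpow (2 / (2 - p)) p * (2 * vp_pow p n b)) * sp_pow p n a.
Proof.
  intros Hp Hp2.
  set (X := sp_pow p n a); set (Y := vp_pow p n b); set (B := supnorm n b).
  set (c1 := rpow 2 p * rpow B p); set (c2 := rpow 2 p * rpow (2 / (2 - p)) p * (2 * Y)).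
  assert (HX : 0 <= X) by apply maxlist_nonneg.
  assert (HY : 0 <= Y) by apply maxlist_nonneg.
  assert (Hc1 : 0 <= c1) by (unfold c1; apply Rmult_le_pos; apply rpow_nonneg).
  assert (Hc2 : 0 <= c2) by (unfold c2; repeat apply Rmult_le_pos; try apply rpow_nonneg; lra).
  replace (rpow 2 p * (rpow B p + rpow (2 / (2 - p)) p * (2 * Y)) * X) with ((c1 + c2) * X)
    by (unfold c1, c2; ring).
  destruct n as [| n]; [apply Rmult_le_pos; [lra | assumption] |].
  apply maxlist_lub; [apply Rmult_le_pos; [lra | assumption] |]; intros P HP.
  rewrite partitions_chains, In_chains_iff in HP by lia.
  eapply Rle_trans.
  { apply (pairsum_le_compat_chain _
      (fun u v => c1 * block_pow p a u v + c2 * chain_max (block_pow p a) u v) 0 P (S n) HP).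
    intros u v _ Huv Hvn; eapply Rle_trans; [apply (block_pow_mult_le p a b (S n)); assumption |].
    unfold c1, c2, B, Y; right; ring. }
  rewrite pairsum_lin.
  assert (H1 : pairsum (block_pow p a) P <= X)
    by (apply pairsum_le_partition_max; [lia | assumption]).
  destruct (pairsum_chain_max_le (block_pow p a) 0 P (S n)) as [R [HR Hle]];
    [intros; apply rpow_nonneg | assumption |].
  assert (H2 : pairsum (block_pow p a) R <= X)
    by (apply pairsum_le_partition_max; [lia | assumption]).
  pose proof (Rmult_le_compat_l c1 _ _ Hc1 H1).
  pose proof (Rmult_le_compat_l c2 _ _ Hc2 (Rle_trans _ _ _ Hle H2)).
  lra.
Qed.

Lemma rpow_plus_scaled_le B V c p : 1 <= p -> 0 <= B -> 0 <= V -> 0 <= c ->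
  rpow B p + c * rpow V p <= rpow ((1 + c) * (B + V)) p.
Proof.
  intros Hp HB HV Hc.
  assert (HBW : rpow B p <= rpow (B + V) p) by (apply rpow_le_compat; lra).
  assert (HVW : rpow V p <= rpow (B + V) p) by (apply rpow_le_compat; lra).
  assert (Hc1 : 1 + c <= rpow (1 + c) p) by (apply rpow_ge_base; lra).
  pose proof (rpow_nonneg B p); pose proof (rpow_nonneg V p).
  rewrite rpow_mult_distr by lra; nra.
Qed.

Theorem corollary2p4 (p : R) (hp1 : 1 <= p) (hp2 : p < 2) :
  exists C : R, 0 < C /\
    forall (n : nat) (a b : nat -> R),
      s_p p n (fun i => a i * b i) <= C * s_p p n a * (supnorm n b + v_p p n b).
Proof.
  set (c := rpow (2 / (2 - p)) p); assert (Hc : 0 <= c) by apply rpow_nonneg.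
  exists (2 * (1 + 2 * c)); split; [lra |]; intros n a b.
  unfold s_p, v_p.
  set (X := sp_pow p n a); set (Y := vp_pow p n b); set (B := supnorm n b).
  set (sa := rpow X (/ p)); set (V := rpow Y (/ p)).
  assert (HX : 0 <= X) by apply maxlist_nonneg.
  assert (HY : 0 <= Y) by apply maxlist_nonneg.
  assert (HB : 0 <= B) by apply maxlist_nonneg.
  assert (Hsa : 0 <= sa) by apply rpow_nonneg.
  assert (HV : 0 <= V) by apply rpow_nonneg.
  replace (2 * (1 + 2 * c) * sa * (B + V)) with (sa * (2 * ((1 + 2 * c) * (B + V)))) by ring.
  rewrite <- (rpow_rpow_inv (sa * _) p) by (repeat apply Rmult_le_pos; lra).
  apply rpow_le_compat; [apply Rinv_0_lt_compat; lra | split; [apply maxlist_nonneg |]].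
  rewrite (rpow_mult_distr sa), (rpow_mult_distr 2) by (repeat apply Rmult_le_pos; lra).
  unfold sa; rewrite rpow_inv_rpow by lra.
  eapply Rle_trans; [apply sp_pow_mult_le; lra |]; fold X Y B c.
  pose proof (rpow_plus_scaled_le B V (2 * c) p hp1 HB HV ltac:(lra)) as Hscaled.
  replace (rpow V p) with Y in Hscaled by (unfold V; rewrite rpow_inv_rpow; lra).
  rewrite Rmult_comm; apply Rmult_le_compat_l; [assumption |].
  apply Rmult_le_compat_l; [apply rpow_nonneg | lra].
Qed.
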